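(* Every profinite-$C$ group is metabelian.
   Context: A permutable complement of a subgroup $H$ of a group $G$ is a subgroup $K$ with $G=HK$ and $H\cap K=1$. A profinite group $G$ is a profinite-$C$ group if every closed subgroup of $G$ has a closed permutable complement in $G$. *)

From HB Require Import structures.
From mathcomp Require Import all_boot all_order all_algebra.
From mathcomp Require Import all_classical all_reals all_analysis.
Set Implicit Arguments. Unset Strict Implicit. Unset Printing Implicit Defensive.
Local Open Scope classical_set_scope.

Record topGroup (T : topologicalType) := TopGroup {
  tg_mul : T -> T -> T;
  tg_inv : T -> T;
  tg_one : T;
  tg_mulA : forall x y z, tg_mul x (tg_mul y z) = tg_mul (tg_mul x y) z;
  tg_mul1g : forall x, tg_mul tg_one x = x;
  tg_mulg1 : forall x, tg_mul x tg_one = x;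
  tg_mulVg : forall x, tg_mul (tg_inv x) x = tg_one;
  tg_mulgV : forall x, tg_mul x (tg_inv x) = tg_one;
  tg_mul_cont : continuous (fun p : T * T => tg_mul p.1 p.2);
  tg_inv_cont : continuous tg_inv
}.

Definition profinite (T : topologicalType) (G : topGroup T) : Prop :=
  [/\ compact [set: T], hausdorff_space T & totally_disconnected [set: T]].

Section GroupNotions.
Context {T : topologicalType} (G : topGroup T).
Local Notation mul := (tg_mul G).
Local Notation inv := (tg_inv G).
Local Notation one := (tg_one G).

Definition is_subgroup (H : set T) : Prop :=
  [/\ H one, forall x y, H x -> H y -> H (mul x y) & forall x, H x -> H (inv x)].

Definition is_closed_subgroup (H : set T) : Prop := is_subgroup H /\ closed H.

Definition perm_complement (H K : set T) : Prop :=
  is_subgroup K /\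
  (forall g, exists h k, [/\ H h, K k & g = mul h k]) /\
  H `&` K = [set one].

Definition profinite_C : Prop :=
  profinite G /\
  forall H, is_closed_subgroup H ->
    exists K, is_closed_subgroup K /\ perm_complement H K.

Definition commutator (x y : T) : T := mul (mul (inv x) (inv y)) (mul x y).

Definition derived_subgroup : set T :=
  fun z => forall H, is_subgroup H -> (forall x y, H (commutator x y)) -> H z.

Definition metabelian : Prop :=
  forall x y, derived_subgroup x -> derived_subgroup y -> mul x y = mul y x.
End GroupNotions.

(* A finite group in which every subgroup has a complement is metabelian.  By
   induction on the order, a minimal normal subgroup N is abelian (the proper
   subgroups are metabelian, hence G is solvable; when G is simple, the
   complement of a subgroup of prime order q = pdiv |G| is core-free of index q,
   which makes G a q-group).  It then has prime order, so G = N ><| K with K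
   metabelian and G' centralising N, and G'' = 1 follows.
   In a profinite group, if xy(yx)^-1 <> 1 for x, y in the derived subgroup, a
   clopen neighbourhood U of 1 misses it (compact Hausdorff totally disconnected
   spaces are zero-dimensional).  The stabiliser of U under right translations is
   an open subgroup of finite index contained in U, and the action on its right
   cosets is a locally constant homomorphism to a finite group.  Preimages of
   subgroups are closed subgroups, so the image inherits the complement property
   and is metabelian by the finite case; thus xy(yx)^-1 lies in U. *)

From HB Require Import structures.
From mathcomp Require Import all_boot all_order all_algebra all_fingroup all_solvable.
From mathcomp Require Import all_classical all_reals all_analysis finmap.
Set Implicit Arguments. Unset Strict Implicit. Unset Printing Implicit Defensive.

Section ComplementedGroups.
Variable gT : finGroupType.
Implicit Types G H K L N : {group gT}.
Local Open Scope group_scope.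

Definition complemented (G : {set gT}) :=
  forall H, H \subset G -> exists K, K \in [complements to H in G].

Lemma complementedS G L : complemented G -> L \subset G -> complemented L.
Proof.
move=> cG sLG H sHL; have [K /complP[tiHK defG]] := cG H (fintype.subset_trans sHL sLG).
exists (K :&: L)%G; apply/complP; split; first by rewrite finset.setIA tiHK setI1g.
by rewrite group_modl // defG (finset.setIidPr sLG).
Qed.

Lemma complement_proper G H K :
  K \in [complements to H in G] -> H :!=: 1 -> K \proper G.
Proof.
case/complP=> tiHK defG ntH; rewrite finset.properEneq -{2}defG mulG_subr andbT.
apply: contraNneq ntH => defK.
by rewrite -tiHK defK (finset.setIidPl _) // -defG mulG_subl.
Qed.

Lemma der1_sub_cent_prime G N : normal N G -> prime #|N| -> G^`(1) \subset 'C(N).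
Proof.
move=> /andP[_ nNG] prN.
have nNG' : G^`(1) \subset 'N(N) := fintype.subset_trans (der_sub 1 G) nNG.
have abAutG : abelian (conj_aut N @* G).
  exact: abelianS (Aut_conj_aut _ _) (Aut_cyclic_abelian (prime_cyclic prN)).
by rewrite -ker_conj_aut -sub_morphim_pre // morphim_der // (derG1P abAutG).
Qed.

Lemma sdprod_prime_metabelian G N K :
  N ><| K = G -> prime #|N| -> abelian K^`(1) -> abelian G^`(1).
Proof.
move=> defG prN abK'; have [nsNG sKG defNK nNK tiNK] := sdprod_context defG.
have nNG := normal_norm nsNG.
have sG''N : G^`(2) \subset N.
  rewrite -quotient_sub1 ?(fintype.subset_trans (der_sub 2 G)) //.
  rewrite quotient_der // -defNK quotientMidl -quotient_der //.
  by have -> : K^`(2) = 1 := derG1P abK'; rewrite quotient1.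
have cNG' := der1_sub_cent_prime nsNG prN.
apply/derG1P/trivgP; have [sNG'|not_sNG'] := boolP (N \subset G^`(1)).
  set L := (K :&: G^`(1))%G.
  have defG' : N * L = G^`(1).
    by rewrite group_modl // defNK (finset.setIidPr (der_sub 1 G)).
  have nLG' : G^`(1) \subset 'N(L).
    rewrite -defG' mul_subG ?normG // cents_norm // centsC.
    exact: fintype.subset_trans (subsetIr _ _) cNG'.
  have abG'L : abelian (G^`(1) / L).
    by rewrite -defG' quotientMidr quotient_abelian ?cyclic_abelian ?prime_cyclic.
  have sG''L : G^`(2) \subset L := der1_min nLG' abG'L.
  by rewrite -tiNK finset.subsetI sG''N (fintype.subset_trans sG''L (subsetIl _ _)).
by rewrite -(prime_TIg prN not_sNG') finset.subsetI sG''N (der_subS 1 G).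
Qed.

Lemma prime_dvd_fact_leq p n : prime p -> p %| n`! -> p <= n.
Proof.
move=> prp; elim: n => [|n IHn]; first by rewrite dvdn1 => /eqP p1; rewrite p1 in prp.
by rewrite factS Euclid_dvdM // => /orP[/dvdn_leq-> // | /IHn/leqW].
Qed.

Lemma core_free_dvd_fact G K : K \subset G -> gcore K G = 1 -> #|G| %| (#|G : K|)`!.
Proof.
move=> sKG coreK1; have actsG := actsRs_rcosets K G.
have faithfulG : [faithful G, on rcosets K G | 'Rs].
  by rewrite /faithful astabRs_rcosets coreK1 setIg1.
rewrite (isom_card (faithful_isom actsG faithfulG)) -(@perm.card_Sym _ (rcosets K G)).
apply: cardSg; apply/fintype.subsetP => _ /morphimP[a _ Ga ->].
rewrite inE; apply/fintype.subsetP => x; rewrite inE actpermE /= /actby.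
by case: ifP => [/andP[] // | _]; rewrite eqxx.
Qed.

(* The complement of [<[x]>], with [#[x]] the least prime [q] dividing [#|G|], is
   core-free of index [q], so [#|G|] divides [q`!] and [G] is a [q]-group. *)
Lemma simple_complemented_abelian G : complemented G -> minnormal G G -> abelian G.
Proof.
move=> cG minG; have [/andP[ntG _] minGP] := mingroupP minG.
set q := pdiv #|G|; have prq : prime q by rewrite pdiv_prime ?cardG_gt1.
have [x Gx ox] := Cauchy prq (pdiv_dvd #|G|).
have sxG : <[x]> \subset G by rewrite cycle_subG.
have [K /complP[tixK defG]] := cG _ sxG.
have sKG : K \subset G by rewrite -defG mulG_subr.
have coreK1 : gcore K G = 1.
  apply: contraTeq (prime_gt1 prq) => ntcore.
  have defcore : gcore K G = G.
    by apply: minGP; rewrite ?ntcore ?gcore_norm // (fintype.subset_trans (gcore_sub K G)).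
  have sxK : <[x]> \subset K by rewrite (fintype.subset_trans sxG) // -defcore gcore_sub.
  by rewrite -ox /order -(finset.setIidPl sxK) tixK cards1.
have iK : #|G : K| = q.
  apply/eqP; rewrite -(eqn_pmul2l (cardG_gt0 K)) Lagrange // -defG.
  by rewrite (TI_cardMg tixK) -/(#[x]) ox mulnC.
have qG : q.-group G.
  apply/pgroupP => r prr rG; apply/eqP/anti_leq.
  rewrite pdiv_min_dvd ?prime_gt1 // andbT prime_dvd_fact_leq // -iK.
  exact: dvdn_trans rG (core_free_dvd_fact sKG coreK1).
have defZ : 'Z(G) = G.
  apply: minGP (center_sub G); rewrite (normal_norm (center_normal G)) andbT.
  by rewrite /= (center_nil_eq1 (pgroup_nil qG)).
by rewrite -defZ center_abelian.
Qed.

(* For [a] of prime order in [N] and [K] a complement of [<[a]>], the subgroup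
   [N :&: K] is normalised by [<[a]> * K = G] and misses [a]; so [N = <[a]>]. *)
Lemma minnormal_complemented_prime G N :
  complemented G -> minnormal N G -> N \subset G -> abelian N -> prime #|N|.
Proof.
move=> cG minN sNG abN; have [/andP[ntN nNG] minNP] := mingroupP minN.
set q := pdiv #|N|; have prq : prime q by rewrite pdiv_prime ?cardG_gt1.
have [a Na oa] := Cauchy prq (pdiv_dvd #|N|).
have saN : <[a]> \subset N by rewrite cycle_subG.
have [K /complP[tiaK defG]] := cG _ (fintype.subset_trans saN sNG).
have tiNK : N :&: K = 1.
  apply: contraTeq (prime_gt1 prq) => ntNK.
  have defNK : N :&: K = N.
    apply: minNP (subsetIl N K); rewrite ntNK -defG mul_subG //.
      by rewrite cents_norm // (fintype.subset_trans saN) // (sub_abelian_cent abN) ?subsetIl.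
    by rewrite normsI ?normG // (fintype.subset_trans _ nNG) // -defG mulG_subr.
  have saK : <[a]> \subset K by rewrite (fintype.subset_trans saN) // -defNK subsetIr.
  by rewrite -oa /order -(finset.setIidPl saK) tiaK cards1.
have defN : <[a]> * (K :&: N) = N by rewrite group_modl // defG (finset.setIidPr sNG).
by rewrite -defN finset.setIC tiNK mulg1 -/(#[a]) oa.
Qed.

Lemma metabelian_sol G : abelian G^`(1) -> solvable G.
Proof. by move/derG1P=> G''1; apply/derivedP; exists 2. Qed.

Lemma minnormal_complemented_abelian G N :
    complemented G -> (forall H, H \proper G -> abelian H^`(1)) ->
  minnormal N G -> N \subset G -> abelian N.
Proof.
move=> cG IHG minN sNG; have [/andP[ntN nNG] _] := mingroupP minN.
have [defN | neNG] := eqVneq N G.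
  by rewrite defN in minN *; exact: simple_complemented_abelian.
have nsNG : normal N G by rewrite /normal sNG.
have [K complK] := cG N sNG; have [_ defG] := complP complK.
have pNG : N \proper G by rewrite finset.properEneq neNG.
have pKG := complement_proper complK ntN.
have solG : solvable G.
  rewrite (series_sol nsNG) !metabelian_sol ?IHG //=.
  by rewrite -defG quotientMidl quotient_sol // metabelian_sol ?IHG.
by have [_ _ /is_abelemP[p _ /abelem_abelian]] := minnormal_solvable minN sNG solG.
Qed.

Theorem complemented_metabelian G : complemented G -> abelian G^`(1).
Proof.
elim: {G}_.+1 {-2}G (ltnSn #|G|) => // n IHn G; rewrite ltnS => leGn cG.
have IHG H : H \proper G -> abelian H^`(1).
  move=> pHG; apply: IHn (complementedS cG (proper_sub pHG)).
  exact: leq_trans (proper_card pHG) leGn.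
have [-> | ntG] := eqsVneq G 1; first exact: abelianS (der_sub 1 1) (abelian1 _).
have [N minN sNG] := minnormal_exists ntG (normG G).
have [/andP[ntN nNG] _] := mingroupP minN.
have abN := minnormal_complemented_abelian cG IHG minN sNG.
have prN := minnormal_complemented_prime cG minN sNG abN.
have [K complK] := cG N sNG; have [tiNK defG] := complP complK.
have pKG := complement_proper complK ntN.
have defsd : N ><| K = G by rewrite sdprodE // (fintype.subset_trans (proper_sub pKG) nNG).
exact: sdprod_prime_metabelian defsd prN (IHG K pKG).
Qed.

End ComplementedGroups.

Local Open Scope classical_set_scope.

Section QuasiComponent.
Context {T : topologicalType}.
Implicit Types (A B O : set T) (x : T).

Definition quasi_component x := \bigcap_(C in [set C | clopen C /\ C x]) C.

Lemma quasi_component_closed x : closed (quasi_component x).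
Proof. by apply: closed_bigI => C [[]]. Qed.

Lemma quasi_component_refl x : quasi_component x x.
Proof. by move=> C []. Qed.

Lemma separatedU_closed A B : closed (A `|` B) -> separated A B -> closed A.
Proof.
move=> clAB [clAB0 _]; apply/closure_id/seteqP; split; first exact: subset_closure.
move=> z clAz; have [//|Bz] : (A `|` B) z.
  by move/closure_id: clAB => ->; apply: closureS clAz; exact: subsetUl.
by have : (closure A `&` B) z by []; rewrite clAB0.
Qed.

Lemma normal_open_separation A B : normal_space T -> closed A -> closed B ->
  A `&` B = set0 -> exists U V, [/\ open U, open V, A `<=` U, B `<=` V & U `&` V = set0].
Proof.
move=> nT clA clB AB0; have AnB : set_nbhs A (~` B).
  apply/set_nbhsP; exists (~` B); split => //; first exact: closed_openC.
  by move=> a Aa Ba; have : (A `&` B) a by []; rewrite AB0.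
have [W /set_nbhsP [U [oU AU UW]] clWnB] := nT A clA _ AnB.
exists U, (~` closure W); split => //.
- exact/closed_openC/closed_closure.
- by move=> b Bb /clWnB; apply.
- by apply/seteqP; split => // u [Uu]; apply; exact/subset_closure/UW.
Qed.

Hypothesis compactT : compact [set: T].

Lemma quasi_component_clopen_sub x O : open O -> quasi_component x `<=` O ->
  exists C, [/\ clopen C, C x & C `<=` O].
Proof.
move=> oO QO; pose F := filter_from [set D | D x /\ clopen D] id.
have PF : ProperFilter F.
  apply: filter_from_proper => [|D [Dx _]]; last by exists x.
  apply: filter_from_filter; first by exists setT; split => //; exact: clopenT.
  by move=> C D [Cx clC] [Dx clD]; exists (C `&` D) => //; split => //; exact: clopenI.
pose sub_O (C : set T) := [set: T] `<=` (fun p => C p -> O p).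
have : \forall C \near powerset_filter_from F, sub_O C.
  apply: (iffLR (compact_near_coveringP _) compactT _ _ (fun C p => C p -> O p) _) => p _.
  have [Op|nOp] := pselect (O p).
    exists (O, setT); first by split; [exact: open_nbhs_nbhs | exact: filterT].
    by case=> q C [].
  have [C [clC Cx] nCp] : exists2 C, clopen C /\ C x & ~ C p.
    apply: contrapT => noC; apply/nOp/QO => C CC.
    by apply: contrapT => nCp; apply: noC; exists C.
  exists (~` C, [set D | D `<=` C]); last by case=> q D [/= nCq DC] /DC.
  split; first by apply: open_nbhs_nbhs; split => //; exact/closed_openC/clC.2.
  by apply: small_set_sub; exists C.
have sub_O_sub A B : A `<=` B -> sub_O B -> sub_O A by move=> AB BO p _ /AB; exact: BO.
case/(near_powerset_filter_fromP _ sub_O_sub) => U [C [Cx clC] CU] UO.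
by exists C; split => // p /CU Up; exact: UO.
Qed.

Lemma quasi_component_sub_open_disjoint x U V : open U -> open V ->
  U `&` V = set0 -> quasi_component x `<=` U `|` V -> U x -> quasi_component x `<=` U.
Proof.
move=> oU oV UV0 QUV Ux; have [W [[oW clW] Wx WUV]] := quasi_component_clopen_sub (openU oU oV) QUV.
have defWU : W `&` U = W `&` ~` V.
  apply/seteqP; split=> p [Wp]; last by case: (WUV p Wp).
  by move=> Up; split=> // Vp; have : (U `&` V) p by []; rewrite UV0.
have clWU : clopen (W `&` U).
  by split; [exact: openI | rewrite defWU; exact: closedI clW (open_closedC oV)].
by move=> p Qp; have [] := Qp _ (conj clWU (conj Wx Ux)).
Qed.

Lemma quasi_component_connected x : hausdorff_space T -> connected (quasi_component x).
Proof.
move=> hT; set Q := quasi_component x; apply/connectedP => E [E0 defQ sepE].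
have sepEb b : separated (E b) (E (~~ b)) by case: b; rewrite // separatedC.
have defQb b : Q = E b `|` E (~~ b) by case: b; rewrite defQ // setUC.
have [b Ebx] : exists b, E b x.
  by move: (@quasi_component_refl x); rewrite -/Q defQ => -[]; [exists false | exists true].
have clE c : closed (E c).
  by apply: separatedU_closed (sepEb c); rewrite -defQb; exact: quasi_component_closed.
have [U [V [oU oV EU EV UV0]]] := normal_open_separation
  (compact_normal hT compactT) (clE b) (clE (~~ b)) (separated_disjoint (sepEb b)).
have QU : Q `<=` U.
  apply: quasi_component_sub_open_disjoint oU oV UV0 _ (EU _ Ebx).
  by rewrite -/Q (defQb b); exact: setUSS.
have [y Ey] := E0 (~~ b); have Qy : Q y by rewrite (defQb b); right.
have : (U `&` V) y by split; [exact: QU | exact: EV].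
by rewrite UV0.
Qed.

Lemma compact_totally_disconnected_zero_dimensional :
  hausdorff_space T -> totally_disconnected [set: T] -> zero_dimensional T.
Proof.
move=> hT tdT x y /eqP xy.
have Qx : quasi_component x `<=` [set x].
  rewrite -(tdT x I); apply: connected_component_max => //.
    exact: quasi_component_refl.
  exact: quasi_component_connected.
apply: contrapT => noC; apply/xy/esym/Qx => C [clC Cx].
by apply: contrapT => nCy; apply: noC; exists C.
Qed.

End QuasiComponent.

(* [T] with the group law of [G], so that the group notations and lemmas of
   MathComp apply; it is pointed by [1] because [compact_cover] is stated for
   pointed spaces. *)
Definition tgroup {T : topologicalType} (G : topGroup T) : Type := T.
HB.instance Definition _ (T : topologicalType) (G : topGroup T) :=
  Topological.on (tgroup G).
HB.instance Definition _ (T : topologicalType) (G : topGroup T) :=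
  isPointed.Build (tgroup G) (tg_one G).
HB.instance Definition _ (T : topologicalType) (G : topGroup T) :=
  isGroup.Build (tgroup G) (@tg_mulA T G) (@tg_mul1g T G) (@tg_mulg1 T G)
    (@tg_mulVg T G) (@tg_mulgV T G).

Section TopologicalGroup.
Context {T : topologicalType} (G : topGroup T).
Local Notation gT := (tgroup G).
Local Open Scope group_scope.
Implicit Types (g h x y : gT) (U N : set gT).

Lemma subgroupP N : is_subgroup G N <->
  [/\ N 1, forall x y, N x -> N y -> N (x * y) & forall x, N x -> N x^-1].
Proof. by []. Qed.

Lemma rcoset_sym N x y : is_subgroup G N -> N (x * y^-1) -> N (y * x^-1).
Proof. by case/subgroupP=> _ _ NV /NV; rewrite invMg invgK. Qed.

Lemma rcoset_trans N x y z : is_subgroup G N ->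
  N (x * y^-1) -> N (y * z^-1) -> N (x * z^-1).
Proof. by case/subgroupP=> _ NM _ /NM/[apply]; rewrite mulgA mulgVK. Qed.

Lemma mulg_cvg (I : Type) (F : set_system I) (FF : Filter F) (u v : I -> gT)
    (a b : gT) :
  u @ F --> a -> v @ F --> b -> (fun i => u i * v i) @ F --> a * b.
Proof.
exact: (@continuous2_cvg _ _ _ _ F FF u v (fun x y : gT => x * y) a b
  (@tg_mul_cont T G (a, b))).
Qed.

Lemma near_rcoset N : nbhs (1 : gT) N -> forall y, \forall g \near y, N (g * y^-1).
Proof.
move=> N1 y; have : (fun g => g * y^-1) @ y --> y * y^-1.
  by apply: mulg_cvg; [exact: cvg_id | exact: cvg_cst].
by rewrite mulgV; apply.
Qed.

Definition rstab U := [set g : gT | forall a, U (a * g) <-> U a].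

Lemma rstab_subgroup U : is_subgroup G (rstab U).
Proof.
apply/subgroupP; split=> [a | g h Sg Sh a | g Sg a]; first by rewrite mulg1.
  by rewrite mulgA Sh Sg.
by rewrite -(Sg (a * g^-1)) mulgVK.
Qed.

Lemma rstab_sub U : U 1 -> rstab U `<=` U.
Proof. by move=> U1 g /(_ 1); rewrite mul1g => ->. Qed.

(* Compactness makes the neighbourhood of [1] on which [U (a * g) <-> U a] holds
   uniform in [a]. *)
Lemma rstab_nbhs1 U : compact [set: gT] -> clopen U -> nbhs (1 : gT) (rstab U).
Proof.
move=> cT [oU clU].
suff cover (a : gT) : \forall x \near a & g \near (1 : gT), U (x * g) <-> U x.
  apply: filterS (iffLR (compact_near_coveringP _) cT _ (nbhs (1 : gT))
    (fun g a => U (a * g) <-> U a) _ (fun a _ => cover a)) => g Sg a; exact: Sg.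
have near_mul V : nbhs a V -> \forall x \near a & g \near (1 : gT), V (x * g).
  by rewrite -[in nbhs a V](mulg1 a) => aV; exact: (@tg_mul_cont T G (a, tg_one G) V aV).
have near_a V : nbhs a V -> \forall x \near a & g \near (1 : gT), V x.
  by move=> aV; exists (V, setT) => [|[? ? []]] //; split => //; exact: filterT.
have [Ua | nUa] := pselect (U a).
  have aU : nbhs a U by exact: open_nbhs_nbhs.
  by apply: filterS (filterI (near_mul _ aU) (near_a _ aU)) => -[x g] [].
have aCU : nbhs a (~` U) by apply: open_nbhs_nbhs; split => //; exact: closed_openC.
apply: filterS (filterI (near_mul _ aCU) (near_a _ aCU)) => -[x g] [] /=.
by move=> nUxg nUx; split.
Qed.

Lemma finite_rcosets N : compact [set: gT] -> is_subgroup G N -> nbhs (1 : gT) N ->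
  exists (I : finType) (r : I -> gT), forall g, exists i, N (g * (r i)^-1).
Proof.
move=> cT sgN N1; have [_ NM _] := (subgroupP N).1 sgN.
have rcoset_open y : open [set g : gT | N (g * y^-1)].
  rewrite openE => g0 Ng0; apply: filterS (near_rcoset N1 g0) => g Ng.
  by have := NM _ _ Ng Ng0; rewrite mulgA mulgVK.
have cover_T : [set: gT] `<=` \bigcup_(y in [set: gT]) [set g | N (g * y^-1)].
  by move=> g _; exists g => //=; rewrite mulgV; case: sgN.
rewrite (@compact_cover gT) in cT.
have [D _ coverD] := cT gT setT _ (fun y _ => rcoset_open y) cover_T.
exists D, val => g; have [y Dy Ngy] := coverD g I.
by exists (FSetSub Dy).
Qed.

Section RcosetAction.
Variables (N : set gT) (I : finType) (r : I -> gT).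
Hypotheses (sgN : is_subgroup G N) (N1 : nbhs (1 : gT) N).
Hypothesis coverN : forall g, exists i, N (g * (r i)^-1).

(* A right coset [N * g] is determined by the representatives [r i] it contains. *)
Definition rcoset_code g : {set I} := [set i | `[< N (g * (r i)^-1) >]].

Lemma rcoset_codeP g h : rcoset_code g = rcoset_code h <-> N (g * h^-1).
Proof.
split=> [codeE | Ngh].
  have [i Ngi] := coverN g.
  have : i \in rcoset_code h by rewrite -codeE inE; exact/asboolP.
  by rewrite inE => /asboolP Nhi; exact: rcoset_trans sgN Ngi (rcoset_sym sgN Nhi).
apply/setP => i; rewrite !inE; apply/asboolP/asboolP => [Ngi | Nhi].
  exact: rcoset_trans sgN (rcoset_sym sgN Ngh) Ngi.
exact: rcoset_trans sgN Ngh Nhi.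
Qed.

Definition rcosets_type := {A : {set I} | `[< exists g, rcoset_code g = A >]}.

Definition rcoset g : rcosets_type :=
  Sub (rcoset_code g) (asboolT (ex_intro _ g erefl)).

Lemma rcosetP g h : rcoset g = rcoset h <-> N (g * h^-1).
Proof. by rewrite -rcoset_codeP; split=> [/(congr1 val) // | codeE]; exact: val_inj. Qed.

Lemma rcoset_mulr g h k : rcoset g = rcoset h -> rcoset (g * k) = rcoset (h * k).
Proof. by rewrite !rcosetP invMg mulgA mulgK. Qed.

Lemma rcoset_rep_subproof (A : rcosets_type) : exists g, rcoset_code g == val A.
Proof. by have /asboolP[g <-] := valP A; exists g. Qed.

Definition rcoset_rep A := xchoose (rcoset_rep_subproof A).

Lemma rcoset_repK A : rcoset (rcoset_rep A) = A.
Proof. exact/val_inj/eqP/(xchooseP (rcoset_rep_subproof A)). Qed.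

Definition rcoset_act g A := rcoset (rcoset_rep A * g).

Lemma rcoset_act_inj g : injective (rcoset_act g).
Proof.
move=> A B /rcosetP; rewrite invMg mulgA mulgK => /rcosetP.
by rewrite !rcoset_repK.
Qed.

Definition rcoset_perm g : {perm rcosets_type} := perm (@rcoset_act_inj g).

Lemma rcoset_permM : {morph rcoset_perm : g h / g * h}.
Proof.
move=> g h; apply/permP => A; rewrite permM !permE /rcoset_act mulgA.
by apply: rcoset_mulr; rewrite rcoset_repK.
Qed.

Lemma rcoset_perm_eq g h : rcoset_perm g = rcoset_perm h -> N (g * h^-1).
Proof.
move/permP/(_ (rcoset 1)); rewrite !permE /rcoset_act; set x := rcoset_rep _.
move=> /rcosetP Nxgh; have /rcosetP : rcoset x = rcoset 1 by rewrite rcoset_repK.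
rewrite invg1 mulg1 => Nx; have [_ NM NV] := (subgroupP N).1 sgN.
have := NM _ _ (NM _ _ (NV _ Nx) Nxgh) Nx.
by rewrite invMg !mulgA mulVg mul1g mulgVK.
Qed.

Lemma rcoset_perm_locally_constant g0 :
  \forall g \near g0, rcoset_perm g = rcoset_perm g0.
Proof.
have near_act A : \forall g \near g0, rcoset_act g A = rcoset_act g0 A.
  have lmul_cvg : (fun g => rcoset_rep A * g) @ g0 --> rcoset_rep A * g0.
    by apply: mulg_cvg; [exact: cvg_cst | exact: cvg_id].
  near=> g; apply/rcosetP; near: g.
  exact: lmul_cvg _ (near_rcoset N1 _).
apply: filterS (filter_forall _ near_act) => g actE.
by apply/permP => A; rewrite !permE actE.
Unshelve. all: by end_near.
Qed.

End RcosetAction.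

Lemma open_subgroup_perm_representation N :
  compact [set: gT] -> is_subgroup G N -> nbhs (1 : gT) N ->
  exists (fT : finGroupType) (f : gT -> fT), [/\ {morph f : g h / g * h},
    forall g0, (\forall g \near g0, f g = f g0) &
    forall g h, f g = f h -> N (g * h^-1)].
Proof.
move=> cT sgN N1; have [I [r coverN]] := finite_rcosets cT sgN N1.
exists _, (rcoset_perm sgN coverN); split; first exact: rcoset_permM.
  exact: rcoset_perm_locally_constant.
exact: rcoset_perm_eq.
Qed.

Definition closed_subgroups_complemented := forall H, is_closed_subgroup G H ->
  exists K, is_closed_subgroup G K /\ perm_complement G H K.

Section LocallyConstantMorphism.
Variables (fT : finGroupType) (f : gT -> fT).
Hypothesis fM : {morph f : g h / g * h}.
Hypothesis f_loc : forall g0, \forall g \near g0, f g = f g0.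

Lemma morphg1 : f 1 = 1.
Proof. by apply: (mulgI (f 1)); rewrite -fM !mulg1. Qed.

Lemma morphgV g : f g^-1 = (f g)^-1.
Proof. by apply: (mulgI (f g)); rewrite -fM !mulgV morphg1. Qed.

Definition morph_imset (K : set gT) : {set fT} :=
  [set a | `[< exists2 k, K k & f k = a >]].

Lemma morph_imsetP K a : reflect (exists2 k, K k & f k = a) (a \in morph_imset K).
Proof. by rewrite inE; exact: asboolP. Qed.

Lemma morph_imset_group_set K : is_subgroup G K -> group_set (morph_imset K).
Proof.
case/subgroupP=> K1 KM _; apply/group_setP; split.
  by apply/morph_imsetP; exists 1; rewrite ?morphg1.
move=> _ _ /morph_imsetP[g Kg <-] /morph_imsetP[h Kh <-].
by apply/morph_imsetP; exists (g * h); rewrite ?fM //; exact: KM.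
Qed.

Lemma subgroupT : is_subgroup G [set: gT]. Proof. by []. Qed.

Definition morph_image := Group (morph_imset_group_set subgroupT).

Lemma mem_morph_image g : f g \in morph_image.
Proof. by apply/morph_imsetP; exists g. Qed.

Lemma morph_preim_closed_subgroup (A : {group fT}) :
  is_closed_subgroup G [set g : gT | f g \in A].
Proof.
split.
  apply/subgroupP; split=> [|g h|g] /=; first by rewrite morphg1 group1.
    by rewrite fM; exact: groupM.
  by rewrite morphgV groupV.
rewrite -[X in closed X]setCK; apply: open_closedC; rewrite openE => g0 /= nAg0.
by apply: filterS (f_loc g0) => g /= ->.
Qed.

Lemma morph_image_complemented :
  closed_subgroups_complemented -> complemented morph_image.
Proof.
move=> complG Hb sHb.
have [K [[sgK _] [_ [decomp tiHK]]]] := complG _ (morph_preim_closed_subgroup Hb).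
exists (Group (morph_imset_group_set sgK)); apply/complP; split.
  apply/trivgP/fintype.subsetP=> a /finset.setIP[Ha /morph_imsetP[k Kk fka]].
  have : ([set g : gT | f g \in Hb] `&` K) k by rewrite /= fka.
  by rewrite tiHK -fka => ->; rewrite morphg1 inE.
apply/eqP; rewrite finset.eqEsubset mul_subG //=.
  apply/fintype.subsetP=> _ /morph_imsetP[g _ <-]; have [h [k [Hh Kk ->]]] := decomp g.
  by rewrite fM mem_mulg //; apply/morph_imsetP; exists k.
by apply/fintype.subsetP=> _ /morph_imsetP[k _ <-]; exact: mem_morph_image.
Qed.

Lemma derived_subgroup_morph g : derived_subgroup G g -> f g \in morph_image^`(1).
Proof.
move=> Dg; apply: (Dg _ (morph_preim_closed_subgroup _).1) => a b /=.
rewrite /commutator !fM !morphgV -mulgA.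
exact: mem_commg (mem_morph_image a) (mem_morph_image b).
Qed.

Lemma morph_derived_commute x y : closed_subgroups_complemented ->
  derived_subgroup G x -> derived_subgroup G y -> f (x * y) = f (y * x).
Proof.
move=> complG Dx Dy.
have abG' := complemented_metabelian (morph_image_complemented complG).
by rewrite !fM (centsP abG' _ (derived_subgroup_morph Dx) _ (derived_subgroup_morph Dy)).
Qed.

End LocallyConstantMorphism.

End TopologicalGroup.

Theorem corollary2p6 (T : topologicalType) (G : topGroup T) :
  profinite_C G -> metabelian G.
Proof.
move=> [[cT hT tdT] complG].
suff commute_derived (x y : tgroup G) :
    derived_subgroup G x -> derived_subgroup G y -> (x * y = y * x)%g.
  by move=> x y; exact: commute_derived.
move=> Dx Dy; apply: contrapT => nxy.
have nz1 : 1%g != (x * y * (y * x)^-1)%g by apply: contra_notN nxy => /eqP/esym/divg1_eq.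
have [U [clU U1 nUz]] := compact_totally_disconnected_zero_dimensional cT hT tdT nz1.
have [fT [f [fM f_loc kerf]]] := open_subgroup_perm_representation cT
  (rstab_subgroup (U : set (tgroup G))) (rstab_nbhs1 cT clU).
have Nz := kerf _ _ (morph_derived_commute fM f_loc complG Dx Dy).
exact: nUz (rstab_sub U1 Nz).
Qed.
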